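(* Let $H$ be a finite index set with nonnegative weights $p_g$ ($g\in H$) having a unique maximum at $g^*$ (i.e. $p_{g^*}>p_g$ for all $g\ne g^*$). Let $\sigma\in C^1([0,\infty))$ be strictly increasing on $(0,\infty)$ with $\sigma'(x)>0$ for $x>0$, and suppose $\phi(x):=\sigma'(x)/x$ is continuous on $(0,\infty)$; write $\phi(0^+):=\lim_{x\downarrow0}\phi(x)\in(0,\infty]$. Consider $\max F(s)=\sum_g p_g\sigma(s_g)$ subject to $s_g\ge0$, $\sum_g s_g^2\le2$. (A) If $\phi$ is nondecreasing on $(0,\sqrt2]$, the unique maximizer is $s^\star_{g^*}=\sqrt2$, $s^\star_g=0$ for $g\ne g^*$ (realized by $\mathbf{u}=\frac1{\sqrt2}\mathbf{e}_{g^*}$, $\mathbf{v}=\frac1{\sqrt2}\mathbf{e}_{(g^* )^{-1}h}$). (B) If $\phi$ is strictly decreasing on $(0,\infty)$, the unique maximizer is $s^\star_g=\phi^{-1}(2\lambda/p_g)$ for all $g$ with $2\lambda/p_g<\phi(0^+)$, and $s^\star_g=0$ for all $g$ with $2\lambda/p_g\ge\phi(0^+)$ (when $\phi(0^+)<\infty$), where $\lambda>0$ is uniquely determined by $\sum_g(s^\star_g)^2=2$. In particular, if $\phi(0^+)=\infty$, all coordinates of $s^\star$ are strictly positive and $p_i>p_j$ implies $s^\star_i>s^\star_j>0$.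
   Context: In the paper, $H$ is a group, a target $h\in H$ is fixed, the collected training pairs are $(g,g^{-1}h)$ with probabilities $p_g$, the weight vector is $\mathbf{w}=[\mathbf{u};\mathbf{v}]\in\mathbb{R}^{2|H|}$ with $\|\mathbf{u}\|^2+\|\mathbf{v}\|^2=1$, and $s_g=u_g+v_{g^{-1}h}$; maximizing the energy is equivalent (up to a positive factor) to maximizing $F$. $\mathbf{e}_g$ denotes a standard basis vector. *)

From HB Require Import structures.
From mathcomp Require Import all_boot all_order all_algebra all_fingroup.
From mathcomp Require Import all_classical all_reals all_analysis.
Set Implicit Arguments. Unset Strict Implicit. Unset Printing Implicit Defensive.
Import Order.TTheory GRing.Theory Num.Theory.
Import numFieldNormedType.Exports.
Local Open Scope ring_scope.
Local Open Scope classical_set_scope.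

Section Defs.
Variables (R : realType) (T : finType).

Definition feasible (s : T -> R) : Prop :=
  (forall g, 0 <= s g) /\ \sum_(g : T) s g ^+ 2 <= 2.

Definition objF (p : T -> R) (sigma : R -> R) (s : T -> R) : R :=
  \sum_(g : T) p g * sigma (s g).

Definition is_maximizer p sigma (s : T -> R) : Prop :=
  feasible s /\ forall t, feasible t -> objF p sigma t <= objF p sigma s.

Definition unique_maximizer p sigma (s : T -> R) : Prop :=
  is_maximizer p sigma s /\ forall t, is_maximizer p sigma t -> t = s.
End Defs.

Definition phi0plus (R : realType) (phi : R -> R) : \bar R :=
  lim ((fun x => (phi x)%:E) @ 0^'+).

From HB Require Import structures.
From mathcomp Require Import all_boot all_order all_algebra all_fingroup.
From mathcomp Require Import all_classical all_reals all_analysis.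
From mathcomp Require Import ring lra.
Import Order.TTheory GRing.Theory Num.Theory.
Import numFieldNormedType.Exports.
Local Open Scope ring_scope.
Local Open Scope classical_set_scope.
Set Implicit Arguments. Unset Strict Implicit. Unset Printing Implicit Defensive.

(* Write phi x = sigma' x / x.  Cauchy's mean value theorem for sigma and x^2
   gives sigma b - sigma a = phi c / 2 * (b^2 - a^2) for some c in ]a, b[,
   which turns monotonicity of phi into comparisons between sigma and
   multiples of x^2.  A point s with sum_g s_g^2 = 2 is then the unique
   maximizer as soon as some lam > 0 satisfies the Lagrange inequality
   p_g (sigma x - sigma s_g) <= lam (x^2 - s_g^2) in every coordinate, and
   equality pins down the coordinates of any other maximizer.
   (A) When phi is nondecreasing, sigma x - sigma 0 stays below the chord
   K x^2 through sqrt 2, and lam = p_gstar K works for the peak; the strict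
   maximality of p_gstar kills the other coordinates of a maximizer.
   (B) When phi is strictly decreasing, the KKT conditions
   phi s_g = 2 lam / p_g (or s_g = 0) make the Lagrange inequality strict.
   Parametrizing lam by the peak coordinate y = s_gstar makes all coordinates
   continuous in y, and the intermediate value theorem reaches norm 2. *)

Section SquareMeanValue.
Variables (R : realType) (sigma dsigma : R -> R).
Hypothesis sigma_der : forall x : R, 0 < x -> is_derive x 1 sigma (dsigma x).
Hypothesis sigma_der0 : (fun t => (sigma t - sigma 0) / t) @ (0:R)^'+ --> dsigma 0.

Lemma sigma_cvg_at_right0 : sigma x @[x --> (0:R)^'+] --> sigma 0.
Proof.
have : sigma 0 + x * ((sigma x - sigma 0) / x) @[x --> (0:R)^'+]
         --> sigma 0 + 0 * dsigma 0.
  apply: cvgD; first exact: cvg_cst.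
  by apply: cvgM => //; apply: cvg_at_right_filter; exact: cvg_id.
rewrite mul0r addr0; apply: cvg_trans; apply: near_eq_cvg; near=> x.
have x_gt0 : 0 < x by near: x; exact: nbhs_right_gt.
by rewrite mulrC divfK ?gt_eqF // addrC subrK.
Unshelve. all: by end_near.
Qed.

Lemma sigma_within_continuous a b : 0 <= a -> a < b ->
  {within `[a, b], continuous sigma}.
Proof.
move=> a_ge0 ab.
have sigma_cont x : 0 < x -> {for x, continuous sigma}.
  move=> x_gt0; apply: differentiable_continuous; apply/derivable1_diffP.
  by case: (sigma_der x_gt0).
apply/continuous_within_itvP => //; split.
- move=> x; rewrite in_itv /= => /andP[ax _]; exact/sigma_cont/(le_lt_trans a_ge0).
- have [a_gt0|] := ltP 0 a; first exact/cvg_at_right_filter/sigma_cont.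
  move=> a_le0; have -> : a = 0 by apply/eqP; rewrite eq_le a_le0.
  exact: sigma_cvg_at_right0.
- exact/cvg_at_left_filter/sigma_cont/(le_lt_trans a_ge0).
Qed.

Lemma sigma_sqr_mvt a b : 0 <= a -> a < b ->
  exists2 c, a < c < b & sigma b - sigma a = dsigma c / c / 2 * (b ^+ 2 - a ^+ 2).
Proof.
move=> a_ge0 ab.
set D := b ^+ 2 - a ^+ 2; set M := sigma b - sigma a.
pose f := (D \*: sigma - M \*: (id * id) : R -> R).
have f_der x : x \in `]a, b[%R -> is_derive x 1 f (D * dsigma x - M * (x * 1 + x * 1)).
  rewrite in_itv /= => /andP[ax _].
  exact: is_deriveB (is_deriveZ D (sigma_der (le_lt_trans a_ge0 ax)))
    (is_deriveZ M (is_deriveM (is_derive_id x 1) (is_derive_id x 1))).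
have f_cont : {within `[a, b], continuous f}.
  apply: within_continuousB.
    by move=> x; apply: continuousZl_tmp; exact: sigma_within_continuous.
  apply: continuous_subspaceT => x.
  by apply: continuousZl_tmp; apply: continuousM; exact: cvg_id.
have [c] := MVT ab f_der f_cont; rewrite in_itv /= => /andP[ac cb].
have fE y : f y = D * sigma y - M * (y * y) by [].
have -> : f b - f a = 0 by rewrite !fE /D /M; ring.
move/esym/eqP; rewrite mulf_eq0 (subr_eq0 b a) (gt_eqF ab) orbF subr_eq0 => /eqP dc.
have c_gt0 : 0 < c by exact: le_lt_trans ac.
exists c; first by rewrite ac cb.
apply: (@mulIf _ (2 * c)); first by rewrite mulf_neq0 ?gt_eqF.
have -> : dsigma c / c / 2 * D * (2 * c) = D * dsigma c by field; rewrite gt_eqF.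
by rewrite dc; ring.
Qed.

Lemma sigma0_lt r : (forall x, 0 < x -> 0 < dsigma x) -> 0 < r -> sigma 0 < sigma r.
Proof.
move=> dsigma_gt0 r_gt0; rewrite -subr_gt0.
have [c /andP[c_gt0 _] ->] := sigma_sqr_mvt (lexx 0) r_gt0.
by rewrite expr0n /= subr0 mulr_gt0 ?exprn_gt0 ?divr_gt0 ?dsigma_gt0.
Qed.

Lemma sigma_chord_bound r : 0 < r ->
  (forall x y, 0 < x -> x <= y -> y <= r -> dsigma x / x <= dsigma y / y) ->
  forall x, 0 <= x <= r -> sigma x - sigma 0 <= (sigma r - sigma 0) / r ^+ 2 * x ^+ 2.
Proof.
move=> r_gt0 phi_mono x /andP[x_ge0 x_le_r].
have [->|x_neq0] := eqVneq x 0; first by rewrite subrr expr0n /= mulr0.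
have x_gt0 : 0 < x by rewrite lt_neqAle eq_sym x_neq0.
have [->|x_neq_r] := eqVneq x r; first by rewrite divfK // gt_eqF ?exprn_gt0.
have x_lt_r : x < r by rewrite lt_neqAle x_neq_r.
have [c /andP[c_gt0 c_lt_x] E0x] := sigma_sqr_mvt (lexx 0) x_gt0.
have [d /andP[x_lt_d d_lt_r] Exr] := sigma_sqr_mvt x_ge0 x_lt_r.
have := phi_mono c d c_gt0 (ltW (lt_trans c_lt_x x_lt_d)) (ltW d_lt_r).
have -> : sigma r - sigma 0 = (sigma x - sigma 0) + (sigma r - sigma x) by ring.
rewrite E0x Exr expr0n /= subr0.
set P := dsigma c / c; set Q := dsigma d / d => PQ.
have x2_le : x ^+ 2 <= r ^+ 2 by rewrite lerXn2r ?nnegrE ?ltW.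
rewrite -subr_ge0.
have -> : (P / 2 * x ^+ 2 + Q / 2 * (r ^+ 2 - x ^+ 2)) / r ^+ 2 * x ^+ 2 - P / 2 * x ^+ 2
    = x ^+ 2 * (r ^+ 2 - x ^+ 2) * (Q - P) / (2 * r ^+ 2).
  by field; rewrite gt_eqF ?exprn_gt0.
apply: divr_ge0; last by rewrite mulr_ge0 ?sqr_ge0.
by rewrite !mulr_ge0 ?sqr_ge0 ?subr_ge0.
Qed.

Lemma sigma_lagrange_gap q lam y x : 0 <= y -> 0 <= x -> x != y ->
  (forall c, 0 < c -> c < y -> 2 * lam < q * (dsigma c / c)) ->
  (forall c, y < c -> q * (dsigma c / c) < 2 * lam) ->
  q * (sigma x - sigma y) < lam * (x ^+ 2 - y ^+ 2).
Proof.
move=> y_ge0 x_ge0 xy below above.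
have [x_lt_y|y_lt_x|x_eq_y] := ltgtP x y; last by rewrite x_eq_y eqxx in xy.
- have [c /andP[x_lt_c c_lt_y] E] := sigma_sqr_mvt x_ge0 x_lt_y.
  have := below c (le_lt_trans x_ge0 x_lt_c) c_lt_y.
  have : x ^+ 2 < y ^+ 2 by rewrite ltrXn2r.
  have -> : sigma x - sigma y = - (sigma y - sigma x) by ring.
  rewrite E; set P := dsigma c / c => xy2 qP; nra.
- have [c /andP[y_lt_c c_lt_x] E] := sigma_sqr_mvt y_ge0 y_lt_x.
  have := above c y_lt_c.
  have : y ^+ 2 < x ^+ 2 by rewrite ltrXn2r.
  rewrite E; set P := dsigma c / c => xy2 qP; nra.
Qed.

End SquareMeanValue.

Lemma sum_sqr_indicator (R : pzSemiRingType) (T : finType) (a : T) (c : R) :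
  \sum_(g : T) (if g == a then c else 0) ^+ 2 = c ^+ 2.
Proof.
rewrite (bigD1 a) //= eqxx big1 ?addr0 // => g /negbTE ->.
by rewrite expr0n.
Qed.

Lemma feasible_le_sqrt2 (R : realType) (T : finType) (t : T -> R) g :
  feasible t -> t g <= Num.sqrt 2.
Proof.
case=> t_ge0 t_norm; rewrite -(ger0_norm (t_ge0 g)) -sqrtr_sqr ler_sqrt //.
apply: le_trans t_norm; rewrite (bigD1 g) //= lerDl.
by apply: sumr_ge0 => i _; exact: sqr_ge0.
Qed.

Section LagrangeSufficiency.
Variables (R : realType) (T : finType) (p : T -> R) (sigma : R -> R).
Variables (lam : R) (s : T -> R).
Hypotheses (lam_gt0 : 0 < lam) (s_ge0 : forall g, 0 <= s g).
Hypothesis s_norm : \sum_g s g ^+ 2 = 2.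
Hypothesis lagrange_gap : forall g x, 0 <= x <= Num.sqrt 2 ->
  p g * (sigma x - sigma (s g)) <= lam * (x ^+ 2 - s g ^+ 2).

Let s_feasible : feasible s. Proof. by split; last rewrite s_norm. Qed.

Lemma objF_lagrange t : objF p sigma t - objF p sigma s =
  \sum_g (p g * (sigma (t g) - sigma (s g)) - lam * (t g ^+ 2 - s g ^+ 2))
  + lam * (\sum_g t g ^+ 2 - 2).
Proof.
rewrite -s_norm -!sumrB mulr_sumr -big_split /=.
by apply: eq_bigr => g _; ring.
Qed.

Let lagrange_terms_le0 t : feasible t ->
  \sum_g (p g * (sigma (t g) - sigma (s g)) - lam * (t g ^+ 2 - s g ^+ 2)) <= 0.
Proof.
move=> t_feas; rewrite -oppr_ge0 -sumrN; apply: sumr_ge0 => g _.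
by rewrite oppr_ge0 subr_le0 lagrange_gap // t_feas.1 feasible_le_sqrt2.
Qed.

Lemma lagrange_is_maximizer : is_maximizer p sigma s.
Proof.
split=> // t t_feas; rewrite -subr_le0 objF_lagrange.
have := lagrange_terms_le0 t_feas; have := t_feas.2.
have := ltW lam_gt0; nra.
Qed.

Lemma lagrange_maximizer_tight t : is_maximizer p sigma t ->
  \sum_g t g ^+ 2 = 2 /\
  forall g, p g * (sigma (t g) - sigma (s g)) = lam * (t g ^+ 2 - s g ^+ 2).
Proof.
case=> t_feas t_max.
have : objF p sigma t - objF p sigma s = 0.
  apply/eqP; rewrite eq_le subr_le0 subr_ge0 (t_max s s_feasible) andbT.
  exact: (lagrange_is_maximizer.2 t t_feas).
rewrite objF_lagrange.
have M_le0 : lam * (\sum_g t g ^+ 2 - 2) <= 0 by rewrite pmulr_rle0 // subr_le0 t_feas.2.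
move: (lagrange_terms_le0 t_feas) M_le0.
set L := \sum_g (_ - _); set M := lam * _ => L_le0 M_le0 LM0.
have L0 : L = 0 by lra.
split.
  have /eqP : M = 0 by lra.
  by rewrite mulf_eq0 gt_eqF //= subr_eq0 => /eqP.
move=> g; apply/eqP; rewrite -subr_eq0 -oppr_eq0; apply/eqP.
move/eqP: L0; rewrite /L -oppr_eq0 -sumrN => /eqP /psumr_eq0P; apply => // i _.
by rewrite oppr_ge0 subr_le0 lagrange_gap // t_feas.1 feasible_le_sqrt2.
Qed.

End LagrangeSufficiency.

Lemma unique_maximizer_peak (R : realType) (T : finType) (p : T -> R)
    (sigma : R -> R) (gs : T) :
  (forall g, 0 <= p g) -> (forall g, g != gs -> p g < p gs) -> 0 < p gs ->
  sigma 0 < sigma (Num.sqrt 2) ->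
  (forall x, 0 <= x <= Num.sqrt 2 ->
     sigma x - sigma 0 <= (sigma (Num.sqrt 2) - sigma 0) / 2 * x ^+ 2) ->
  unique_maximizer p sigma (fun g => if g == gs then Num.sqrt 2 else 0).
Proof.
move=> p_ge0 p_max pgs_gt0 sigma0_lt chord.
set r := Num.sqrt 2; set K := (sigma r - sigma 0) / 2; set s := fun g => _.
have r2 : r ^+ 2 = 2 by rewrite sqr_sqrtr.
have K_gt0 : 0 < K by rewrite divr_gt0 // subr_gt0.
have lam_gt0 : 0 < p gs * K by rewrite mulr_gt0.
have s_ge0 g : 0 <= s g by rewrite /s; case: ifP; rewrite ?sqrtr_ge0.
have s_norm : \sum_g s g ^+ 2 = 2 by rewrite sum_sqr_indicator r2.
have gap g x : 0 <= x <= r ->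
    p g * (sigma x - sigma (s g)) <= p gs * K * (x ^+ 2 - s g ^+ 2).
  move=> /chord; rewrite -/K => chord_x; rewrite /s; case: eqP => [->|/eqP g_neq].
    have -> : sigma x - sigma r = (sigma x - sigma 0) - 2 * K by rewrite /K; field.
    by rewrite r2 -mulrA; apply: ler_wpM2l; [exact: ltW | nra].
  rewrite expr0n subr0 -mulrA; apply: le_trans (ler_wpM2l (p_ge0 g) chord_x) _.
  by apply: ler_wpM2r; [rewrite mulr_ge0 ?sqr_ge0 ?ltW | exact/ltW/p_max].
split; first exact: lagrange_is_maximizer lam_gt0 s_ge0 s_norm gap.
move=> t t_max; have [[t_ge0 _] _] := t_max.
have [t_norm t_tight] := lagrange_maximizer_tight lam_gt0 s_ge0 s_norm gap t_max.
have t_off g : g != gs -> t g = 0.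
  move=> g_neq; have := t_tight g; rewrite /s (negbTE g_neq) expr0n subr0 => E.
  have chord_t := chord (t g).
  rewrite -/r -/K t_ge0 (feasible_le_sqrt2 _ t_max.1) in chord_t.
  have H : p gs * (K * t g ^+ 2) <= p g * (K * t g ^+ 2).
    by rewrite mulrA -E ler_wpM2l ?chord_t.
  have [X_gt0|X_le0] := ltP 0 (K * t g ^+ 2).
    by rewrite ler_pM2r // leNgt p_max in H.
  have /eqP : K * t g ^+ 2 = 0.
    by apply/eqP; rewrite eq_le X_le0 mulr_ge0 ?sqr_ge0 ?ltW.
  by rewrite mulf_eq0 gt_eqF //= sqrf_eq0 => /eqP.
apply/funext => g; rewrite /s; case: eqP => [->|/eqP]; last exact: t_off.
rewrite (bigD1 gs) //= big1 ?addr0 in t_norm; last by move=> i /t_off ->; rewrite expr0n.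
by rewrite /r -t_norm sqrtr_sqr ger0_norm.
Qed.

Section DecreasingInverse.
Variables (R : realType) (phi : R -> R).
Hypothesis phi_dec : forall x y : R, 0 < x -> x < y -> phi y < phi x.

Lemma phi_lt_anti x y : 0 < x -> phi x < phi y -> y < x.
Proof.
move=> x_gt0; apply: contraTT; rewrite -!leNgt le_eqVlt => /orP[/eqP -> //|].
by move/(phi_dec x_gt0)/ltW.
Qed.

Lemma phi_le_anti x y : 0 < x -> phi x <= phi y -> y <= x.
Proof.
move=> x_gt0; apply: contraTT; rewrite -!ltNge; exact: phi_dec.
Qed.

Lemma phi_inj x y : 0 < x -> 0 < y -> phi x = phi y -> x = y.
Proof.
move=> x_gt0 y_gt0 phixy; apply/le_anti/andP.
by split; apply: phi_le_anti; rewrite ?phixy.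
Qed.

Let phi0plusE : phi0plus phi =
  ereal_sup ((fun x => (phi x)%:E) @` [set` Interval (BRight 0) (BInfty R false)]).
Proof.
apply/cvg_lim => //; apply: nonincreasing_at_right_cvge => // x y.
rewrite !in_itv /= !andbT => x_gt0 _; rewrite le_eqVlt => /orP[/eqP->//|xy].
by rewrite lee_fin ltW ?phi_dec.
Qed.

Lemma phi_lt_phi0plus x : 0 < x -> ((phi x)%:E < phi0plus phi)%E.
Proof.
move=> x_gt0; rewrite phi0plusE.
apply: (@lt_le_trans _ _ (phi (x / 2))%:E).
  by rewrite lte_fin phi_dec ?divr_gt0 // ltr_pdivrMr //; lra.
by apply: ereal_sup_ubound; exists (x / 2); rewrite //= in_itv /= andbT divr_gt0.
Qed.

Lemma lt_phi0plus_ex v : (v%:E < phi0plus phi)%E -> exists2 x, 0 < x & v < phi x.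
Proof.
rewrite phi0plusE => /ereal_sup_gt [_ [x x_gt0 <-]]; rewrite lte_fin => v_lt.
by exists x => //; move: x_gt0; rewrite /= in_itv /= andbT.
Qed.

(* [phinv v] is the preimage of [v] in ]0, +oo[, and [0] when there is none,
   in particular when [v] is at least [phi0plus phi]. *)
Definition phinv v := xget 0 [set x | 0 < x /\ phi x = v].

Lemma phinv_cases v : phinv v = 0 \/ 0 < phinv v /\ phi (phinv v) = v.
Proof. by rewrite /phinv; case: xgetP => [x _ Px|_]; [right|left]. Qed.

Lemma phinv_ge0 v : 0 <= phinv v.
Proof. by case: (phinv_cases v) => [->|[/ltW]]. Qed.

Lemma phinvK x : 0 < x -> phinv (phi x) = x.
Proof.
move=> x_gt0; apply: xget_unique => // y [y_gt0 phiy].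
exact: phi_inj.
Qed.

Lemma phinv_eq0 v : ~ (v%:E < phi0plus phi)%E -> phinv v = 0.
Proof.
move=> v_ge; apply: xgetPN => x [x_gt0 phix]; apply: v_ge.
by rewrite -phix phi_lt_phi0plus.
Qed.

Lemma phinv_le y v : 0 < y -> phi y <= v -> phinv v <= y.
Proof.
move=> y_gt0 phiy_le; case: (phinv_cases v) => [->|[x_gt0 phix]]; first exact: ltW.
by apply: phi_le_anti; rewrite // phix.
Qed.

Lemma phinv_lt y v : 0 < y -> phi y < v -> phinv v < y.
Proof.
move=> y_gt0 phiy_lt; case: (phinv_cases v) => [->//|[x_gt0 phix]].
by apply: phi_lt_anti; rewrite // phix.
Qed.

Hypothesis phi_cont : forall x : R, 0 < x -> {for x, continuous phi}.

Lemma phi_surj y v : 0 < y -> phi y <= v -> (v%:E < phi0plus phi)%E ->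
  exists2 x, 0 < x & phi x = v.
Proof.
move=> y_gt0 phiy_le v_lt; have [e e_gt0 v_lt_phie] := lt_phi0plus_ex v_lt.
have e_le_y : e <= y by apply: phi_le_anti; rewrite // (le_trans phiy_le) ?ltW.
have phi_within : {within `[e, y], continuous phi}.
  apply/continuous_in_subspaceT => z /[1!inE]; rewrite /= in_itv /= => /andP[ez _].
  exact/phi_cont/(lt_le_trans e_gt0).
have phie_ge : phi y <= phi e by rewrite (le_trans phiy_le) ?ltW.
have [|x] := IVT e_le_y phi_within (v := v).
  by rewrite (min_r phie_ge) (max_l phie_ge) phiy_le ltW.
by rewrite in_itv /= => /andP[ex _] phix; exists x => //; exact: lt_le_trans ex.
Qed.

Lemma phinvP y v : 0 < y -> phi y <= v -> (v%:E < phi0plus phi)%E ->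
  0 < phinv v /\ phi (phinv v) = v.
Proof.
move=> y_gt0 phiy_le v_lt.
by have [x x_gt0 <-] := phi_surj y_gt0 phiy_le v_lt; rewrite phinvK.
Qed.

Lemma phinv_continuous y v : 0 < y -> phi y <= v -> {for v, continuous phinv}.
Proof.
move=> y_gt0 phiy_le; have [v_lt|v_ge] := pselect (v%:E < phi0plus phi)%E.
  have [x x_gt0 <-] := phi_surj y_gt0 phiy_le v_lt.
  suff /nbhs_singleton : {near phi x, continuous phinv} by [].
  apply: near_can_continuous.
    by near=> z; apply: phinvK; near: z; exact: lt_nbhsr.
  by near=> z; apply: phi_cont; near: z; exact: lt_nbhsr.
apply/cvgrPdist_lt => e e_gt0; rewrite (phinv_eq0 v_ge).
have phie_lt : phi e < v.
  by rewrite -lte_fin (lt_le_trans (phi_lt_phi0plus e_gt0)) // leNgt; exact/negP.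
near=> w; rewrite sub0r normrN ger0_norm ?phinv_ge0 //.
by apply: phinv_lt => //; near: w; exact: lt_nbhsr.
Unshelve. all: by end_near.
Qed.

End DecreasingInverse.

Section KKTSolution.
Variables (R : realType) (T : finType) (p : T -> R) (phi : R -> R).

Definition active (lam : R) (g : T) : Prop :=
  0 < p g /\ ((2 * lam / p g)%:E < phi0plus phi)%E.

Definition kkt_solution (lam : R) (s : T -> R) : Prop :=
  (forall g, active lam g -> 0 < s g /\ phi (s g) = 2 * lam / p g) /\
  (forall g, ~ active lam g -> s g = 0).

Lemma kkt_solution_ge0 lam s : kkt_solution lam s -> forall g, 0 <= s g.
Proof.
case=> act inact g; have [/act [/ltW]|/inact ->] := pselect (active lam g) => //.
Qed.

Hypothesis phi_dec : forall x y : R, 0 < x -> x < y -> phi y < phi x.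
Hypothesis p_ge0 : forall g, 0 <= p g.

Lemma kkt_solution_infty_order lam s : 0 < lam -> kkt_solution lam s ->
  phi0plus phi = +oo%E ->
  (forall g, 0 < p g -> 0 < s g) /\ (forall i j, p j < p i -> s j < s i).
Proof.
move=> lam_gt0 [act inact] phi0_oo.
have act_pos g : 0 < p g -> active lam g by move=> pg_gt0; rewrite /active phi0_oo ltry.
split=> [g /act_pos/act [] //|i j pji].
have pi_gt0 : 0 < p i by exact: le_lt_trans pji.
have [si_gt0 phisi] := act i (act_pos i pi_gt0).
have [pj_gt0|pj_le0] := ltP 0 (p j); last first.
  by rewrite inact // => -[pj_gt0 _]; move: pj_le0; rewrite leNgt pj_gt0.
have [sj_gt0 phisj] := act j (act_pos j pj_gt0).
apply: (phi_lt_anti phi_dec si_gt0); rewrite phisi phisj.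
by rewrite ltr_pM2l ?mulr_gt0 // ltf_pV2.
Qed.

End KKTSolution.

Section PeakSolution.
Variables (R : realType) (T : finType) (p : T -> R) (phi : R -> R) (gs : T).
Hypotheses (p_le : forall g, p g <= p gs) (pgs_gt0 : 0 < p gs).
Hypothesis phi_dec : forall x y : R, 0 < x -> x < y -> phi y < phi x.
Hypothesis phi_cont : forall x : R, 0 < x -> {for x, continuous phi}.
Hypothesis phi_gt0 : forall x : R, 0 < x -> 0 < phi x.

(* Candidates are parametrized by their peak coordinate [y]: the multiplier
   [p gs * phi y / 2] forces the [gs] coordinate to be [y], and all the other
   coordinates lie in [[0, y]]. *)
Definition peak_multiplier (y : R) : R := p gs * phi y / 2.

Definition peak_solution (y : R) (g : T) : R :=
  if 0 < p g then phinv phi (p gs / p g * phi y) else 0.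

Lemma peak_multiplier_gt0 y : 0 < y -> 0 < peak_multiplier y.
Proof. by move=> y_gt0; rewrite divr_gt0 // mulr_gt0 // phi_gt0. Qed.

Let peak_level y g : 2 * peak_multiplier y / p g = p gs / p g * phi y.
Proof. by rewrite /peak_multiplier [2 * _]mulrC divfK ?pnatr_eq0 // mulrAC. Qed.

Let phi_le_peak_level y g : 0 < y -> 0 < p g -> phi y <= p gs / p g * phi y.
Proof.
move=> y_gt0 pg_gt0; rewrite mulrAC ler_pdivlMr // mulrC.
by rewrite ler_pM2r ?phi_gt0.
Qed.

Lemma peak_solution_kkt y : 0 < y ->
  kkt_solution p phi (peak_multiplier y) (peak_solution y).
Proof.
move=> y_gt0; split=> g; rewrite /active peak_level /peak_solution.
  case=> pg_gt0 lt; rewrite pg_gt0.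
  by apply: (phinvP phi_dec phi_cont y_gt0 _ lt); exact: phi_le_peak_level.
case: ifP => // pg_gt0 not_act; apply: (phinv_eq0 phi_dec) => lt.
exact: not_act.
Qed.

Lemma peak_solution_le y g : 0 < y -> 0 <= peak_solution y g <= y.
Proof.
move=> y_gt0; rewrite /peak_solution; case: ifP => [pg_gt0|_]; last by rewrite lexx ltW.
by rewrite phinv_ge0 (phinv_le phi_dec) ?phi_le_peak_level.
Qed.

Lemma peak_solution_peak y : 0 < y -> peak_solution y gs = y.
Proof.
move=> y_gt0; rewrite /peak_solution pgs_gt0 divff ?gt_eqF // mul1r.
exact: phinvK.
Qed.

Lemma peak_solution_continuous g y : 0 < y ->
  {for y, continuous (peak_solution ^~ g)}.
Proof.
move=> y_gt0; have [pg_gt0|pg_le0] := boolP (0 < p g); last first.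
  by rewrite /peak_solution (negbTE pg_le0); exact: cvg_cst.
rewrite /peak_solution pg_gt0.
apply: (continuous_comp (f := fun z => p gs / p g * phi z)).
  by apply: continuousM; [exact: cvg_cst | exact: phi_cont].
by apply: (phinv_continuous phi_dec phi_cont y_gt0); rewrite phi_le_peak_level.
Qed.

Lemma exists_peak_solution_norm2 :
  exists2 y, 0 < y & \sum_g peak_solution y g ^+ 2 = 2.
Proof.
set r := Num.sqrt (2 : R); have r_gt0 : 0 < r by rewrite sqrtr_gt0.
have r2 : r ^+ 2 = 2 by rewrite sqr_sqrtr.
set N : R := #|T|%:R.
have N_ge1 : 1 <= N by rewrite ler1n; apply/card_gt0P; exists gs.
have N_gt0 : 0 < N by exact: lt_le_trans N_ge1.
set a := r / N; have a_gt0 : 0 < a by rewrite divr_gt0.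
have a_le_r : a <= r by rewrite ler_pdivrMr // ler_peMr // ltW.
pose f y := \sum_g peak_solution y g ^+ 2.
have fa_le : f a <= 2.
  apply: (@le_trans _ _ (\sum_(g : T) a ^+ 2)).
    apply: ler_sum => g _; have /andP[s_ge0 s_le] := peak_solution_le g a_gt0.
    by apply: lerXn2r; rewrite // nnegrE ltW.
  have -> : \sum_(g : T) a ^+ 2 = 2 / N.
    by rewrite sumr_const -mulr_natr -/N /a expr_div_n r2; field; rewrite gt_eqF.
  by rewrite ler_pdivrMr // ler_peMr.
have fr_ge : 2 <= f r.
  rewrite /f (bigD1 gs) //= peak_solution_peak // r2 lerDl.
  by apply: sumr_ge0 => g _; exact: sqr_ge0.
have f_cont : {within `[a, r], continuous f}.
  apply/continuous_in_subspaceT => y /[1!inE]; rewrite /= in_itv /= => /andP[ay _].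
  apply: (@cvg_big _ _ +%R 0 xpredT add_continuous) => g _.
  rewrite expr2; have y_gt0 := lt_le_trans a_gt0 ay.
  by apply: continuousM; exact: peak_solution_continuous.
have [|y] := IVT a_le_r f_cont (v := 2); first by rewrite ge_min fa_le le_max fr_ge orbT.
by rewrite in_itv /= => /andP[ay _] fy; exists y => //; exact: lt_le_trans ay.
Qed.

End PeakSolution.

Section KKTMaximizer.
Variables (R : realType) (T : finType) (p : T -> R) (sigma dsigma : R -> R).
Hypothesis sigma_der : forall x : R, 0 < x -> is_derive x 1 sigma (dsigma x).
Hypothesis sigma_der0 : (fun t => (sigma t - sigma 0) / t) @ (0:R)^'+ --> dsigma 0.
Local Notation phi := (fun y : R => dsigma y / y).
Hypothesis phi_dec : forall x y : R, 0 < x -> x < y -> phi y < phi x.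
Hypothesis p_ge0 : forall g, 0 <= p g.

Section FixedSolution.
Variables (lam : R) (s : T -> R).
Hypotheses (lam_gt0 : 0 < lam) (s_kkt : kkt_solution p phi lam s).

Lemma kkt_solution_gap g x : 0 <= x -> x != s g ->
  p g * (sigma x - sigma (s g)) < lam * (x ^+ 2 - s g ^+ 2).
Proof.
move=> x_ge0 x_neq; have [act inact] := s_kkt.
have [a|na] := pselect (active p phi lam g).
  have [[sg_gt0 phis] [pg_gt0 _]] := (act g a, a).
  apply: (sigma_lagrange_gap sigma_der sigma_der0 (ltW sg_gt0) x_ge0 x_neq).
    move=> c c_gt0 c_lt; rewrite [p g * _]mulrC -(ltr_pdivrMr _ _ pg_gt0) -phis.
    exact: phi_dec.
  move=> c c_gt; rewrite [p g * _]mulrC -(ltr_pdivlMr _ _ pg_gt0) -phis.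
  exact: phi_dec.
rewrite (inact g na) in x_neq *.
apply: (sigma_lagrange_gap sigma_der sigma_der0 (lexx 0) x_ge0 x_neq).
  by move=> c c_gt0 /(lt_trans c_gt0); rewrite ltxx.
move=> c c_gt0; have [pg_gt0|pg_le0] := ltP 0 (p g).
  rewrite [p g * _]mulrC -(ltr_pdivlMr _ _ pg_gt0) -lte_fin.
  apply: lt_le_trans (phi_lt_phi0plus phi_dec c_gt0) _.
  by rewrite leNgt; apply/negP => lt; apply: na.
have -> : p g = 0 by apply/le_anti; rewrite pg_le0 p_ge0.
by rewrite mul0r mulr_gt0.
Qed.

Lemma kkt_solution_unique_maximizer : \sum_g s g ^+ 2 = 2 ->
  unique_maximizer p sigma s.
Proof.
move=> s_norm; have s_ge0 := kkt_solution_ge0 s_kkt.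
have gap g x : 0 <= x <= Num.sqrt 2 ->
    p g * (sigma x - sigma (s g)) <= lam * (x ^+ 2 - s g ^+ 2).
  case/andP=> x_ge0 _; have [->|x_neq] := eqVneq x (s g).
    by rewrite !subrr !mulr0.
  exact/ltW/kkt_solution_gap.
split; first exact: lagrange_is_maximizer lam_gt0 s_ge0 s_norm gap.
move=> t t_max.
have [_ t_tight] := lagrange_maximizer_tight lam_gt0 s_ge0 s_norm gap t_max.
apply/funext => g; apply/eqP/negPn/negP => t_neq.
by have := kkt_solution_gap (t_max.1.1 g) t_neq; rewrite t_tight ltxx.
Qed.

End FixedSolution.

(* Both solutions are the unique maximizer, hence equal, and a nonzero
   coordinate determines the multiplier. *)
Lemma kkt_multiplier_unique lam lam' s s' : 0 < lam -> 0 < lam' ->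
  kkt_solution p phi lam s -> kkt_solution p phi lam' s' ->
  \sum_g s g ^+ 2 = 2 -> \sum_g s' g ^+ 2 = 2 -> lam' = lam.
Proof.
move=> lam_gt0 lam'_gt0 s_kkt s'_kkt s_norm s'_norm.
have s'_eq : s' = s.
  apply: (kkt_solution_unique_maximizer lam_gt0 s_kkt s_norm).2.
  exact: (kkt_solution_unique_maximizer lam'_gt0 s'_kkt s'_norm).1.
have /existsP [g sg_neq0] : [exists g, s g != 0].
  apply: contraT; rewrite negb_exists => /forallP s0.
  move: s_norm; rewrite big1 => [/eqP|g _]; first by rewrite eq_sym pnatr_eq0.
  by rewrite (eqP (negPn (s0 g))) expr0n.
have act : active p phi lam g.
  by apply/not_notP => na; rewrite (s_kkt.2 g na) eqxx in sg_neq0.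
have act' : active p phi lam' g.
  by apply/not_notP => na; rewrite -s'_eq (s'_kkt.2 g na) eqxx in sg_neq0.
have pg_neq0 : p g != 0 by rewrite gt_eqF // act.1.
have := (s'_kkt.1 g act').2; rewrite s'_eq (s_kkt.1 g act).2 => E.
have -> : lam' = 2 * lam' / p g * p g / 2 by field.
by rewrite -E; field.
Qed.

End KKTMaximizer.

Lemma max_weight_gt0 (R : realDomainType) (T : finType) (p : T -> R) (gs : T) :
  (forall g, 0 <= p g) -> \sum_g p g = 1 -> (forall g, p g <= p gs) -> 0 < p gs.
Proof.
move=> p_ge0 p_sum1 p_le; rewrite ltNge; apply/negP => pgs_le0.
have : \sum_g p g = 0.
  by apply: big1 => g _; apply/le_anti; rewrite p_ge0 (le_trans (p_le g)).
by rewrite p_sum1 => /eqP; rewrite oner_eq0.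
Qed.

Theorem mainTheorem7 (R : realType) (gT : finGroupType) (h gstar : gT)
  (p : gT -> R) (sigma dsigma : R -> R)
  (* weights: probabilities with a unique maximum at gstar *)
  (p_ge0 : forall g, 0 <= p g)
  (p_sum1 : \sum_(g : gT) p g = 1)
  (p_max : forall g, g != gstar -> p g < p gstar)
  (* sigma in C^1([0,oo)) with derivative dsigma *)
  (sigma_der : forall x : R, 0 < x -> is_derive x 1 sigma (dsigma x))
  (sigma_der0 : (fun t : R => (sigma t - sigma 0) / t) @ (0:R)^'+ --> dsigma 0)
  (dsigma_cont : {within `[0, +oo[, continuous dsigma})
  (sigma_incr : forall x y : R, 0 < x -> x < y -> sigma x < sigma y)
  (dsigma_pos : forall x : R, 0 < x -> 0 < dsigma x)
  (* phi(x) = sigma'(x)/x continuous on (0,oo) *)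
  (phi_cont : forall x : R, 0 < x -> {for x, continuous (fun y : R => dsigma y / y)}) :
  let phi := fun y : R => dsigma y / y in
  (* (A) *)
  ((forall x y : R, 0 < x -> x <= y -> y <= Num.sqrt 2 -> phi x <= phi y) ->
     let sstar := fun g : gT => if g == gstar then Num.sqrt 2 else 0 : R in
     let u := fun g : gT => if g == gstar then (Num.sqrt 2)^-1 else 0 : R in
     let v := fun g : gT => if g == (gstar^-1 * h)%g then (Num.sqrt 2)^-1 else 0 : R in
     unique_maximizer p sigma sstar /\
     (\sum_(g : gT) u g ^+ 2 + \sum_(g : gT) v g ^+ 2 = 1) /\
     (forall g, sstar g = u g + v (g^-1 * h)%g))
  /\
  (* (B) *)
  ((forall x y : R, 0 < x -> x < y -> phi y < phi x) ->
     let active := fun (lam : R) (g : gT) =>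
       0 < p g /\ ((2 * lam / p g)%:E < phi0plus phi)%E in
     let good := fun (lam : R) (s : gT -> R) =>
       (forall g, active lam g -> 0 < s g /\ phi (s g) = 2 * lam / p g) /\
       (forall g, ~ active lam g -> s g = 0) in
     exists lam : R, exists sstar : gT -> R,
       0 < lam /\ good lam sstar /\ \sum_(g : gT) sstar g ^+ 2 = 2 /\
       (forall lam' s', 0 < lam' -> good lam' s' ->
          \sum_(g : gT) s' g ^+ 2 = 2 -> lam' = lam) /\
       unique_maximizer p sigma sstar /\
       (phi0plus phi = +oo%E ->
          (forall g, 0 < p g -> 0 < sstar g) /\
          (forall i j, p j < p i -> sstar j < sstar i))).
Proof.
move=> phi.
have p_le g : p g <= p gstar by have [->|/p_max/ltW] := eqVneq g gstar.
have pgs_gt0 := max_weight_gt0 p_ge0 p_sum1 p_le.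
split=> [phi_mono sstar u v|phi_dec active good].
  have r_gt0 : 0 < Num.sqrt (2 : R) by rewrite sqrtr_gt0.
  have r2 : Num.sqrt (2 : R) ^+ 2 = 2 by rewrite sqr_sqrtr.
  split.
    apply: unique_maximizer_peak => //.
      exact: (sigma0_lt sigma_der sigma_der0 dsigma_pos r_gt0).
    by move=> x /(sigma_chord_bound sigma_der sigma_der0 r_gt0 phi_mono); rewrite r2.
  split; first by rewrite !sum_sqr_indicator exprVn r2; field.
  move=> g; rewrite /sstar /u /v (inj_eq (mulIg h)) (inj_eq invg_inj).
  case: eqP => _; last by rewrite addr0.
  have -> : (Num.sqrt 2)^-1 + (Num.sqrt 2)^-1 = Num.sqrt (2 : R) ^+ 2 / Num.sqrt 2.
    by rewrite r2; field; rewrite gt_eqF.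
  by rewrite expr2 mulfK // gt_eqF.
have phi_gt0 x : 0 < x -> 0 < phi x by move=> x_gt0; rewrite divr_gt0 ?dsigma_pos.
have [y y_gt0 s_norm] :=
  exists_peak_solution_norm2 p_le pgs_gt0 phi_dec phi_cont phi_gt0.
have s_kkt := peak_solution_kkt p_le phi_dec phi_cont phi_gt0 y_gt0.
have lam_gt0 := peak_multiplier_gt0 pgs_gt0 phi_gt0 y_gt0.
exists (peak_multiplier p phi gstar y), (peak_solution p phi gstar y).
do 3!split=> //; split.
  move=> lam' s' lam'_gt0 s'_kkt s'_norm.
  exact: (kkt_multiplier_unique sigma_der sigma_der0 phi_dec p_ge0
            lam_gt0 lam'_gt0 s_kkt s'_kkt s_norm s'_norm).
split; first exact: (kkt_solution_unique_maximizer sigma_der sigma_der0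
                       phi_dec p_ge0 lam_gt0 s_kkt s_norm).
exact: (kkt_solution_infty_order phi_dec p_ge0 lam_gt0 s_kkt).
Qed.
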